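(* For any binary-input symmetric CQ channel $W$, $\delta(W)=F(W^\perp)$, where $\delta(W)=\tfrac12\|W(0)-W(1)\|_1$ and $F(W^\perp)=F(W^\perp(0),W^\perp(1))$ with $F(\rho,\sigma)=\|\sqrt\rho\sqrt\sigma\|_1$.
   Context: A binary-input CQ channel is a map $W$ assigning to each $z\in\{0,1\}=\mathbb Z_2$ a density operator $W(z)$ on a finite-dimensional Hilbert space $\mathcal H_B$; it is symmetric if there is a unitary $U$ with $UW(z)U^*=W(z+1)$ for $z=0,1$. Conjugate basis of $\mathbb C^2$: $|\tilde x\rangle=2^{-1/2}\sum_z(-1)^{xz}|z\rangle$. Dual channel: choose purifications $|\varphi_z\rangle_{BD}$ of $W(z)$, let $\mathcal H_C\cong\mathbb C^2$, define the isometry $V|z\rangle_A=|z\rangle_C|\varphi_z\rangle_{BD}$, put $|\theta_x\rangle=V|\tilde x\rangle_A$ and $W^\perp(x)=\mathrm{Tr}_B|\theta_x\rangle\langle\theta_x|$. *)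

(* Quantum-information notions over an arbitrary
   numClosedFieldType C (playing the role of the complex numbers). *)
From HB Require Import structures.
From mathcomp Require Import all_boot all_order all_algebra.
Set Implicit Arguments. Unset Strict Implicit. Unset Printing Implicit Defensive.
Import Order.TTheory GRing.Theory Num.Theory.
Local Open Scope ring_scope.

Section QDefs.
Variable C : numClosedFieldType.

Definition adjmx m n (A : 'M[C]_(m, n)) : 'M[C]_(n, m) := (map_mx Num.conj A)^T.

Definition psdmx n (A : 'M[C]_n) : Prop :=
  adjmx A = A /\ forall u : 'rV[C]_n, 0 <= (u *m A *m adjmx u) 0 0.

Definition densitymx n (A : 'M[C]_n) : Prop := psdmx A /\ \tr A = 1.

Definition unitary n (U : 'M[C]_n) : Prop := U *m adjmx U = 1%:M.

Definition sqrtmx n (A : 'M[C]_n) : 'M[C]_n :=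
  invmx (spectralmx A) *m diag_mx (map_mx sqrtC (spectral_diag A)) *m spectralmx A.

Definition trnorm m n (X : 'M[C]_(m, n)) : C := \tr (sqrtmx (adjmx X *m X)).

Definition fidelity n (rho sigma : 'M[C]_n) : C := trnorm (sqrtmx rho *m sqrtmx sigma).

(* Tensor products.  C^a (x) C^b is C^(a*b), the basis vector |i>|j>
   having index mxvec_index i j. *)
Definition tket a b (u : 'cV[C]_a) (v : 'cV[C]_b) : 'cV[C]_(a * b) :=
  (mxvec (u *m v^T))^T.

Definition ketbra n (psi : 'cV[C]_n) : 'M[C]_n := psi *m adjmx psi.

Definition ptrace2 a b (X : 'M[C]_(a * b)) : 'M[C]_a :=
  \matrix_(i, i') \sum_(j < b) X (mxvec_index i j) (mxvec_index i' j).

Definition ptrace_mid a b c (X : 'M[C]_(a * (b * c))) : 'M[C]_(a * c) :=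
  \matrix_(k, k')
    let: (i, l) := pair_of_mxvec_index (mxvec_indexP k) in
    let: (i', l') := pair_of_mxvec_index (mxvec_indexP k') in
    \sum_(j < b) X (mxvec_index i (mxvec_index j l))
                   (mxvec_index i' (mxvec_index j l')).

End QDefs.

(* Writing W^perp(x) = T_x T_x^*, where T_x is theta_x reshaped into an
   operator from H_B to C (x) D, one gets F(W^perp(0), W^perp(1)) = ||T_1^* T_0||_1,
   because X^* X and X X^* have the same nonzero spectrum.  Expanding theta_x in
   the conjugate basis gives T_1^* T_0 = (W(0) - W(1))^T / 2. *)

From HB Require Import structures.
From mathcomp Require Import all_boot all_order all_algebra ring.
Import Order.TTheory GRing.Theory Num.Theory.
Set Implicit Arguments. Unset Strict Implicit. Unset Printing Implicit Defensive.
Local Open Scope ring_scope.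

Section Adjoint.
Variable C : numClosedFieldType.

Lemma adjmxE m n (A : 'M[C]_(m, n)) : adjmx A = (A ^t* )%sesqui.
Proof. by apply/matrixP => i j; rewrite !mxE. Qed.

Lemma adjmxK m n (A : 'M[C]_(m, n)) : adjmx (adjmx A) = A.
Proof. by apply/matrixP => i j; rewrite !mxE conjCK. Qed.

Lemma adjmxM m n p (A : 'M[C]_(m, n)) (B : 'M[C]_(n, p)) :
  adjmx (A *m B) = adjmx B *m adjmx A.
Proof.
apply/matrixP => i j; rewrite !mxE rmorph_sum; apply: eq_bigr => k _.
by rewrite !mxE rmorphM mulrC.
Qed.

Lemma adjmxZ m n a (A : 'M[C]_(m, n)) : adjmx (a *: A) = a^* *: adjmx A.
Proof. by apply/matrixP => i j; rewrite !mxE rmorphM. Qed.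

Lemma adjmx_trmx m n (A : 'M[C]_(m, n)) : adjmx A^T = (adjmx A)^T.
Proof. by apply/matrixP => i j; rewrite !mxE. Qed.

Lemma adjmx_diag n (a : 'rV[C]_n) : adjmx (diag_mx a) = diag_mx (map_mx Num.conj a).
Proof.
apply/matrixP => i j; rewrite !mxE; have [->|_] := eqVneq i j.
  by rewrite !mulr1n.
by rewrite !mulr0n rmorph0.
Qed.

Lemma psdmx_mul_adj m k (A : 'M[C]_(m, k)) : psdmx (A *m adjmx A).
Proof.
split; first by rewrite adjmxM adjmxK.
move=> u; rewrite !mulmxA -[u *m A *m adjmx A *m adjmx u]mulmxA -adjmxM.
by rewrite !mxE; apply: sumr_ge0 => i _; rewrite !mxE mul_conjC_ge0.
Qed.

Lemma psdmx_adj_mul m k (A : 'M[C]_(m, k)) : psdmx (adjmx A *m A).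
Proof. by have := psdmx_mul_adj (adjmx A); rewrite adjmxK. Qed.

End Adjoint.

Section SquareRoot.
Variables (C : numClosedFieldType) (n : nat) (A : 'M[C]_n).
Hypothesis A_psd : psdmx A.
Let P := spectralmx A.
Let l := spectral_diag A.

Lemma spectralmx_mul_adj : P *m adjmx P = 1%:M.
Proof. by rewrite adjmxE; apply/unitarymxP/spectral_unitarymx. Qed.

Lemma invmx_spectralmx : invmx P = adjmx P.
Proof. by rewrite adjmxE invmx_unitary // spectral_unitarymx. Qed.

Lemma psdmx_normal : A \is normalmx.
Proof. by rewrite qualifE -adjmxE A_psd.1. Qed.

Lemma psdmx_spectral : A = adjmx P *m diag_mx l *m P.
Proof. by rewrite -invmx_spectralmx; apply/orthomx_spectralP/psdmx_normal. Qed.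

Lemma spectral_diag_ge0 i : 0 <= l 0 i.
Proof.
have -> : l 0 i = (P *m A *m adjmx P) i i.
  rewrite psdmx_spectral !mulmxA spectralmx_mul_adj mul1mx -mulmxA.
  by rewrite spectralmx_mul_adj mulmx1 mxE eqxx mulr1n.
have -> : (P *m A *m adjmx P) i i = (row i P *m A *m adjmx (row i P)) 0 0.
  by rewrite -row_mul !mxE; apply: eq_bigr => k _; rewrite !mxE.
exact: A_psd.2.
Qed.

Lemma sqrtmx_spectral : sqrtmx A = adjmx P *m diag_mx (map_mx sqrtC l) *m P.
Proof. by rewrite /sqrtmx invmx_spectralmx. Qed.

Lemma sqrtmx_adj : adjmx (sqrtmx A) = sqrtmx A.
Proof.
rewrite sqrtmx_spectral !adjmxM adjmxK adjmx_diag mulmxA; congr (_ *m _ *m _).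
by apply/matrixP => i j; rewrite !mxE geC0_conj // sqrtC_ge0 spectral_diag_ge0.
Qed.

Lemma sqrtmx_mul_self : sqrtmx A *m sqrtmx A = A.
Proof.
rewrite sqrtmx_spectral !mulmxA -[_ *m P *m adjmx P]mulmxA spectralmx_mul_adj.
rewrite mulmx1 -[_ *m diag_mx _ *m diag_mx _]mulmxA mulmx_diag [RHS]psdmx_spectral.
by congr (_ *m diag_mx _ *m _); apply/rowP => j; rewrite !mxE -expr2 sqrtCK.
Qed.

Lemma mxtrace_sqrtmx : \tr (sqrtmx A) = \sum_i sqrtC (l 0 i).
Proof.
rewrite sqrtmx_spectral mxtrace_mulC mulmxA spectralmx_mul_adj mul1mx.
by rewrite mxtrace_diag; apply: eq_bigr => i _; rewrite mxE.
Qed.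

End SquareRoot.

Section CharPoly.
Variable C : numClosedFieldType.

Lemma char_poly_similar n (P M : 'M[C]_n) : P \in unitmx ->
  char_poly (invmx P *m M *m P) = char_poly M.
Proof.
move=> Pu; rewrite /char_poly /char_poly_mx.
have XE : ('X%:M : 'M[{poly C}]_n) =
    map_mx polyC (invmx P) *m 'X%:M *m map_mx polyC P.
  by rewrite -mulmxA -scalar_mxC mulmxA -map_mxM mulVmx // map_mx1 mul1mx.
rewrite {1}XE !map_mxM -mulmxBl -mulmxBr !det_mulmx mulrC mulrA -det_mulmx.
by rewrite -map_mxM mulmxV // map_mx1 det1 mul1r.
Qed.

Lemma char_poly_diag n (a : 'rV[C]_n) :
  char_poly (diag_mx a) = \prod_i ('X - (a 0 i)%:P).
Proof.
rewrite char_poly_trig ?diag_mx_is_trig //.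
by apply: eq_bigr => i _; rewrite mxE eqxx mulr1n.
Qed.

Lemma char_poly_normal n (A : 'M[C]_n) : A \is normalmx ->
  char_poly A = \prod_i ('X - (spectral_diag A 0 i)%:P).
Proof.
move=> An; rewrite {1}(orthomx_spectralP An) char_poly_similar ?spectral_unit //.
exact: char_poly_diag.
Qed.

Lemma char_poly_trmx n (M : 'M[C]_n) : char_poly M^T = char_poly M.
Proof.
rewrite /char_poly -det_tr /char_poly_mx linearB /= tr_scalar_mx.
by rewrite -map_trmx trmxK.
Qed.

(* Sylvester: conjugating [[A B, 0], [B, 0]] by [[1, A], [0, 1]] gives
   [[0, 0], [B, B A]]. *)
Lemma char_poly_mulmxC m n (A : 'M[C]_(m, n)) (B : 'M[C]_(n, m)) :
  char_poly (A *m B) * 'X^n = char_poly (B *m A) * 'X^m.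
Proof.
pose S := block_mx 1%:M A 0 (1%:M : 'M_n).
have S_unit : S \in unitmx by rewrite unitmxE det_ublock !det1 mulr1 unitr1.
have invS : invmx S = block_mx 1%:M (- A) 0 1%:M.
  rewrite -[invmx S]mul1mx -[1%:M in LHS](_ : block_mx 1%:M (- A) 0 1%:M *m S = 1%:M).
    by rewrite -mulmxA mulmxV // mulmx1.
  rewrite mulmx_block !(mul1mx, mul0mx, mulmx0, mulmx1, addr0, add0r, subrr).
  by rewrite -scalar_mx_block.
have map0 p q : ((0 : 'M[C]_(p, q)) ^ polyC)%sesqui = 0.
  by apply/matrixP => i j; rewrite !mxE.
have char_lblock p q (X : 'M[C]_p) (Y : 'M[C]_(q, p)) (Z : 'M[C]_q) :
    char_poly (block_mx X 0 Y Z) = char_poly X * char_poly Z.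
  rewrite /char_poly /char_poly_mx scalar_mx_block map_block_mx opp_block_mx.
  by rewrite add_block_mx map0 subr0 det_lblock.
have char0 p : char_poly (0 : 'M[C]_p) = 'X^p.
  by rewrite /char_poly /char_poly_mx map0 subr0 det_scalar.
rewrite -char0 -(char_lblock _ _ _ B) -(char_poly_similar _ S_unit) invS !mulmx_block.
rewrite !(mul1mx, mul0mx, mulmx0, mulmx1, addr0, add0r, mulNmx, subrr).
by rewrite char_lblock char0 mulrC.
Qed.

End CharPoly.

Section TraceNorm.
Variable C : numClosedFieldType.

Lemma big_sum_pad0 (s : seq C) k (f : C -> C) : f 0 = 0 ->
  \sum_(x <- s ++ nseq k 0) f x = \sum_(x <- s) f x.
Proof.
by move=> f0; rewrite big_cat /= [X in _ + X]big1_seq ?addr0 // => x /andP[_ /nseqP[-> _]].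
Qed.

Lemma big_prod_XsubC_pad0 (s : seq C) k :
  \prod_(x <- s ++ nseq k 0) ('X - x%:P) = \prod_(x <- s) ('X - x%:P) * 'X^k.
Proof. by rewrite big_cat big_nseq subr0 (iter_mulr k 'X 1) mulr1. Qed.

Lemma sum_roots_pad0 m p (a : 'rV[C]_m) (b : 'rV[C]_p) k l (f : C -> C) :
  f 0 = 0 ->
  (\prod_i ('X - (a 0 i)%:P)) * 'X^k = (\prod_j ('X - (b 0 j)%:P)) * 'X^l ->
  \sum_i f (a 0 i) = \sum_j f (b 0 j).
Proof.
move=> f0 ab; pose sq q (c : 'rV[C]_q) := [seq c 0 i | i <- index_enum 'I_q].
have bigE q (c : 'rV[C]_q) (R : Type) (idx : R) op (F : C -> R) :
    \big[op/idx]_i F (c 0 i) = \big[op/idx]_(x <- sq q c) F x.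
  by rewrite big_map.
rewrite !bigE -(big_sum_pad0 (sq m a) k f0) -(big_sum_pad0 (sq p b) l f0).
apply/perm_big/prod_XsubC_eq.
by rewrite !big_prod_XsubC_pad0 -!bigE.
Qed.

Lemma mxtrace_sqrtmx_char_poly m p (A : 'M[C]_m) (a : 'rV[C]_p) k l :
  psdmx A -> char_poly A * 'X^k = (\prod_i ('X - (a 0 i)%:P)) * 'X^l ->
  \tr (sqrtmx A) = \sum_i sqrtC (a 0 i).
Proof.
move=> A_psd; rewrite (char_poly_normal (psdmx_normal A_psd)) mxtrace_sqrtmx //.
exact/sum_roots_pad0/sqrtC0.
Qed.

Lemma trnorm_adjmx m n (X : 'M[C]_(m, n)) : trnorm (adjmx X) = trnorm X.
Proof.
have XX_psd := psdmx_adj_mul X.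
rewrite /trnorm adjmxK [RHS]mxtrace_sqrtmx //.
apply: (mxtrace_sqrtmx_char_poly (k := n) (l := m) (psdmx_mul_adj X)).
by rewrite char_poly_mulmxC (char_poly_normal (psdmx_normal XX_psd)).
Qed.

Lemma trnorm_trmx m n (X : 'M[C]_(m, n)) : trnorm X^T = trnorm X.
Proof.
have XX_psd := psdmx_mul_adj X.
have -> : trnorm X^T = \tr (sqrtmx (X *m adjmx X)^T).
  by rewrite /trnorm adjmx_trmx trmx_mul.
rewrite -trnorm_adjmx /trnorm adjmxK [RHS]mxtrace_sqrtmx //.
apply: (mxtrace_sqrtmx_char_poly (k := 0) (l := 0)).
  by rewrite trmx_mul -adjmx_trmx; apply: psdmx_adj_mul.
by rewrite char_poly_trmx (char_poly_normal (psdmx_normal XX_psd)).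
Qed.

Lemma trnorm_scale m n a (X : 'M[C]_(m, n)) : trnorm (a *: X) = `|a| * trnorm X.
Proof.
have XX_psd := psdmx_adj_mul X; set P := spectralmx (adjmx X *m X).
set l := spectral_diag (adjmx X *m X).
have aXE : adjmx (a *: X) *m (a *: X) = invmx P *m diag_mx (`|a| ^+ 2 *: l) *m P.
  rewrite adjmxZ -scalemxAl -scalemxAr scalerA (mulrC a^*) -normCK.
  rewrite {1}(orthomx_spectralP (psdmx_normal XX_psd)) -/l -/P scalemxAl scalemxAr.
  by congr (_ *m _ *m _); apply/matrixP => i j; rewrite !mxE mulrnAr.
rewrite /trnorm [in RHS]mxtrace_sqrtmx // mulr_sumr.
rewrite (mxtrace_sqrtmx_char_poly (k := 0) (l := 0) (a := `|a| ^+ 2 *: l)); last 2 first.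
- exact: psdmx_adj_mul.
- by rewrite aXE char_poly_similar ?spectral_unit // char_poly_diag.
apply: eq_bigr => i _; rewrite mxE sqrtCM ?nnegrE ?exprn_ge0 ?spectral_diag_ge0 //.
by rewrite sqrCK.
Qed.

Lemma trnorm_mul_hermitian_sqrt m k p (S0 S1 : 'M[C]_m)
    (T0 : 'M[C]_(m, k)) (T1 : 'M[C]_(m, p)) :
  adjmx S0 = S0 -> S0 *m S0 = T0 *m adjmx T0 ->
  adjmx S1 = S1 -> S1 *m S1 = T1 *m adjmx T1 ->
  trnorm (S0 *m S1) = trnorm (adjmx T1 *m T0).
Proof.
(* With Y := S1 T0: (S0 S1)^* (S0 S1) = Y Y^* and Y^* Y = (T1^* T0)^* (T1^* T0). *)
move=> S0_adj S0_sqr S1_adj S1_sqr.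
have -> : trnorm (S0 *m S1) = trnorm (adjmx (S1 *m T0)).
  rewrite /trnorm adjmxK !adjmxM S0_adj S1_adj !mulmxA -[S1 *m S0 *m S0]mulmxA.
  by rewrite S0_sqr !mulmxA.
rewrite trnorm_adjmx /trnorm !adjmxM adjmxK S1_adj !mulmxA -[_ *m S1 *m S1]mulmxA.
by rewrite S1_sqr !mulmxA.
Qed.

Lemma fidelity_mul_adj m k p (T0 : 'M[C]_(m, k)) (T1 : 'M[C]_(m, p)) :
  fidelity (T0 *m adjmx T0) (T1 *m adjmx T1) = trnorm (adjmx T1 *m T0).
Proof.
have [T0_psd T1_psd] := (psdmx_mul_adj T0, psdmx_mul_adj T1).
by apply: trnorm_mul_hermitian_sqrt; rewrite ?sqrtmx_adj ?sqrtmx_mul_self.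
Qed.

End TraceNorm.

Section Tensor.
Variable C : numClosedFieldType.

Lemma pair_of_mxvec_indexE m n (i : 'I_m) (j : 'I_n) :
  pair_of_mxvec_index (mxvec_indexP (mxvec_index i j)) = (i, j).
Proof.
suff E k (ik : is_mxvec_index k) : k = mxvec_index i j -> pair_of_mxvec_index ik = (i, j).
  exact: E.
by case: ik => i' j' /= /cast_ord_inj/enum_rank_inj.
Qed.

Lemma sum_mxvec_index m n (F : 'I_(m * n) -> C) :
  \sum_k F k = \sum_i \sum_j F (mxvec_index i j).
Proof. by rewrite (reindex _ (curry_mxvec_bij _ _)) /= pair_big; apply: eq_bigr => -[]. Qed.

Lemma tketE a b (u : 'cV[C]_a) (v : 'cV[C]_b) i j :
  tket u v (mxvec_index i j) 0 = u i 0 * v j 0.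
Proof. by rewrite /tket mxE mxvecE mxE big_ord1 mxE. Qed.

(* A vector of C^a (x) C^b (x) C^c, read as an operator C^b -> C^a (x) C^c. *)
Definition reshape_mid a b c (v : 'cV[C]_(a * (b * c))) : 'M[C]_(a * c, b) :=
  \matrix_(k, j) let: (i, l) := pair_of_mxvec_index (mxvec_indexP k) in
                 v (mxvec_index i (mxvec_index j l)) 0.

Lemma reshape_midE a b c (v : 'cV[C]_(a * (b * c))) i j l :
  reshape_mid v (mxvec_index i l) j = v (mxvec_index i (mxvec_index j l)) 0.
Proof. by rewrite mxE pair_of_mxvec_indexE. Qed.

Lemma ptrace_mid_ketbra a b c (v : 'cV[C]_(a * (b * c))) :
  ptrace_mid (ketbra v) = reshape_mid v *m adjmx (reshape_mid v).
Proof.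
apply/matrixP => k k'; rewrite !mxE; under [RHS]eq_bigr do rewrite !mxE.
case: (pair_of_mxvec_index (mxvec_indexP k)) => i l.
case: (pair_of_mxvec_index (mxvec_indexP k')) => i' l' /=.
by apply: eq_bigr => j _; rewrite !mxE big_ord1 !mxE.
Qed.

End Tensor.

Section DualChannel.
Variables (C : numClosedFieldType) (n d : nat) (phi : 'I_2 -> 'cV[C]_(n * d)).

Definition purification_isometry : 'M[C]_(2 * (n * d), 2) :=
  \sum_(z < 2) tket (delta_mx z 0 : 'cV[C]_2) (phi z) *m (delta_mx z 0)^T.

Definition conj_basis (x : 'I_2) : 'cV[C]_2 :=
  (sqrtC 2)^-1 *: \sum_(z < 2) ((-1) ^+ (x * z)%N *: delta_mx z 0).

Definition dual_state x := purification_isometry *m conj_basis x.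

Lemma conj_basisE x z : conj_basis x z 0 = (sqrtC 2)^-1 * (-1) ^+ (x * z)%N.
Proof.
rewrite !mxE summxE (bigD1 z) //= big1 => [|y /negPf yz]; rewrite !mxE.
  by rewrite !eqxx mulr1 addr0.
by rewrite eq_sym yz mulr0.
Qed.

Lemma dual_stateE x c q :
  dual_state x (mxvec_index c q) 0 = (sqrtC 2)^-1 * (-1) ^+ (x * c)%N * phi c q 0.
Proof.
rewrite /dual_state /purification_isometry mulmx_suml summxE (bigD1 c) //=.
rewrite big1 => [|z /negPf zc]; rewrite -mulmxA trmx_delta -rowE mxE big_ord1.
  by rewrite tketE [row _ _ _ _]mxE conj_basisE mxE !eqxx mul1r addr0 mulrC.
by rewrite tketE mxE eq_sym zc !mul0r.
Qed.

Lemma dual_state0E c q : dual_state 0 (mxvec_index c q) 0 = (sqrtC 2)^-1 * phi c q 0.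
Proof. by rewrite dual_stateE mul0n expr0 mulr1. Qed.

Lemma dual_state1E c q :
  dual_state 1 (mxvec_index c q) 0 = (sqrtC 2)^-1 * (-1) ^+ c * phi c q 0.
Proof. by rewrite dual_stateE mul1n. Qed.

Lemma adj_reshape_dual_state :
  adjmx (reshape_mid (dual_state 1)) *m reshape_mid (dual_state 0) =
  2^-1 *: (ptrace2 (ketbra (phi 0)) - ptrace2 (ketbra (phi 1)))^T.
Proof.
have e_conj : ((sqrtC 2)^-1)^* = (sqrtC 2)^-1 :> C.
  by rewrite geC0_conj // invr_ge0 sqrtC_ge0 ler0n.
have e_sqr : (sqrtC 2)^-1 * (sqrtC 2)^-1 = 2^-1 :> C.
  by rewrite -invfM -expr2 sqrtCK.
have lift01 : lift ord0 ord0 = 1 :> 'I_2 by apply/val_inj.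
apply/matrixP => i i'; rewrite !mxE sum_mxvec_index big_ord_recl big_ord1 mulrBr.
rewrite !mulr_sumr -sumrN lift01; congr (_ + _); apply: eq_bigr => l _.
all: rewrite /adjmx mxE [map_mx _ _ _ _]mxE !reshape_midE dual_state0E dual_state1E.
all: rewrite /ketbra mxE big_ord1 !mxE !rmorphM /= e_conj -e_sqr.
- by rewrite expr0 rmorph1; ring.
- by rewrite expr1 rmorphN1; ring.
Qed.

Lemma fidelity_dual_states :
  fidelity (ptrace_mid (ketbra (dual_state 0))) (ptrace_mid (ketbra (dual_state 1))) =
  2^-1 * trnorm (ptrace2 (ketbra (phi 0)) - ptrace2 (ketbra (phi 1))).
Proof.
rewrite !ptrace_mid_ketbra fidelity_mul_adj adj_reshape_dual_state.
by rewrite trnorm_scale trnorm_trmx ger0_norm // invr_ge0 ler0n.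
Qed.

End DualChannel.

Theorem proposition3 (C : numClosedFieldType) (n d : nat)
    (W : 'I_2 -> 'M[C]_n)
    (Wdens : forall z, densitymx (W z))
    (Wsym : exists U : 'M[C]_n, unitary U /\
              forall z : 'I_2, U *m W z *m adjmx U = W (z + 1)%R)
    (phi : 'I_2 -> 'cV[C]_(n * d))
    (phi_pur : forall z, ptrace2 (ketbra (phi z)) = W z) :
  let V : 'M[C]_(2 * (n * d), 2) :=
    \sum_(z < 2) tket (delta_mx z 0 : 'cV[C]_2) (phi z) *m (delta_mx z 0)^T in
  let xt (x : 'I_2) : 'cV[C]_2 :=
    (sqrtC 2)^-1 *: \sum_(z < 2) ((-1) ^+ (x * z)%N *: delta_mx z 0) in
  let theta (x : 'I_2) := V *m xt x in
  let Wperp (x : 'I_2) : 'M[C]_(2 * d) := ptrace_mid (ketbra (theta x)) in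
  2^-1 * trnorm (W 0 - W 1) = fidelity (Wperp 0) (Wperp 1).
Proof. by rewrite -!phi_pur -fidelity_dual_states. Qed.
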